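(* Let $A=[\mathbf a_1,\dots,\mathbf a_M]\in\mathbb{R}_+^{K\times M}$ with column sums $\mathbf 1^\top\mathbf a_y>0$ for all $y$, let $\boldsymbol\beta\in\mathbb{R}_+^K$ with $b:=\mathbf 1^\top\boldsymbol\beta>0$, assume $\{\mathbf w\ge\mathbf 0:A\mathbf w=\boldsymbol\beta\}\neq\emptyset$, and let $D=\mathrm{diag}(1,\dots,M)$. Define \[\theta^*_{\max}=\max_{\mathbf w\ge\mathbf 0,\,A\mathbf w=\boldsymbol\beta}\mathbf 1^\top AD\mathbf w,\quad\tilde\theta_{\max}=\max_{\mathbf w\ge\mathbf 0,\,\mathbf 1^\top A\mathbf w=b}\mathbf 1^\top AD\mathbf w,\] \[\theta^*_{\min}=\min_{\mathbf w\ge\mathbf 0,\,A\mathbf w=\boldsymbol\beta}\mathbf 1^\top AD\mathbf w,\quad\tilde\theta_{\min}=\min_{\mathbf w\ge\mathbf 0,\,\mathbf 1^\top A\mathbf w=b}\mathbf 1^\top AD\mathbf w.\] Then \[\tilde\theta_{\max}-\theta^*_{\max}\ge\frac b2\Big\|\frac{\boldsymbol\beta}{\mathbf 1^\top\boldsymbol\beta}-\frac{\mathbf a_M}{\mathbf 1^\top\mathbf a_M}\Big\|_1,\qquad\theta^*_{\min}-\tilde\theta_{\min}\ge\frac b2\Big\|\frac{\boldsymbol\beta}{\mathbf 1^\top\boldsymbol\beta}-\frac{\mathbf a_1}{\mathbf 1^\top\mathbf a_1}\Big\|_1.\] *)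

From HB Require Import structures.
From mathcomp Require Import all_boot all_order all_algebra.
From mathcomp Require Import classical_sets reals.
Set Implicit Arguments. Unset Strict Implicit. Unset Printing Implicit Defensive.
Import Order.TTheory GRing.Theory Num.Theory.
Local Open Scope ring_scope.
Local Open Scope classical_set_scope.

(* Columns are indexed by 'I_n (n = M, the number of columns); the column
   with index y : 'I_n is a_{y+1} in the paper, so D = diag(1,...,n). *)

Definition onesr (K : nat) (R : ringType) : 'rV[R]_K := const_mx 1.

Definition Dmat (R : ringType) (n : nat) : 'M[R]_n :=
  diag_mx (\row_(y < n) (y.+1)%:R).

Definition objective (R : ringType) (K n : nat) (A : 'M[R]_(K, n)) (w : 'cV[R]_n) : R :=
  (onesr K R *m A *m Dmat R n *m w) 0 0.

Definition nonneg_vec (R : numDomainType) (n : nat) (w : 'cV[R]_n) : Prop :=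
  forall y, 0 <= w y 0.

Definition sumv (R : ringType) (n : nat) (v : 'cV[R]_n) : R := \sum_(i < n) v i 0.

Definition l1norm (R : numDomainType) (n : nat) (v : 'cV[R]_n) : R := \sum_(i < n) `|v i 0|.

Definition feas_star (R : numDomainType) (K n : nat) (A : 'M[R]_(K, n)) (beta : 'cV[R]_K)
  : set 'cV[R]_n := [set w | nonneg_vec w /\ A *m w = beta].

Definition feas_tilde (R : numDomainType) (K n : nat) (A : 'M[R]_(K, n)) (b : R)
  : set 'cV[R]_n := [set w | nonneg_vec w /\ sumv (A *m w) = b].

(* max / min of the objective over a feasible set (attained here: the sets are
   nonempty compact polytopes, so sup/inf are the max/min) *)
Definition theta_max (R : realType) (K n : nat) (A : 'M[R]_(K, n)) (S : set 'cV[R]_n) : R :=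
  sup [set objective A w | w in S].
Definition theta_min (R : realType) (K n : nat) (A : 'M[R]_(K, n)) (S : set 'cV[R]_n) : R :=
  inf [set objective A w | w in S].

From HB Require Import structures.
From mathcomp Require Import all_boot all_order all_algebra.
From mathcomp Require Import classical_sets reals.
From mathcomp Require Import ring lra.
Import Order.TTheory GRing.Theory Num.Theory.
Local Open Scope ring_scope.
Local Open Scope classical_set_scope.

(* Write [c_j] for the column sums of [A]. On both feasible sets the objective
   is [\sum_j (j+1) c_j w_j] subject to [\sum_j c_j w_j = b], so over the relaxed
   set its extreme values [(M+1) b] and [b] are attained by putting all the
   weight on the last, resp. first, column. When [A w = beta], the vector
   [beta / b] is a convex combination of the normalised columns [a_j / c_j]
   with weights [c_j w_j / b], so half its l1 distance to [a_k / c_k] is at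
   most the weight off column [k]. Every unit of weight off the last column
   costs the objective at least one against [(M+1) b], and every unit off the
   first column gains at least one over [b]. *)

Section L1norm.
Context {R : numDomainType} {n : nat}.
Implicit Types (u v : 'cV[R]_n).

Lemma sumvZ (a : R) v : sumv (a *: v) = a * sumv v.
Proof. by rewrite /sumv mulr_sumr; apply: eq_bigr => i _; rewrite mxE. Qed.

Lemma l1normZ (a : R) v : l1norm (a *: v) = `|a| * l1norm v.
Proof. by rewrite /l1norm mulr_sumr; apply: eq_bigr => i _; rewrite mxE normrM. Qed.

Lemma l1norm_sum_le {I : finType} (F : I -> 'cV[R]_n) :
  l1norm (\sum_j F j) <= \sum_j l1norm (F j).
Proof.
rewrite /l1norm exchange_big /=; apply: ler_sum => i _.
by rewrite summxE; apply: ler_norm_sum.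
Qed.

Lemma l1normB_le u v : nonneg_vec u -> nonneg_vec v ->
  l1norm (u - v) <= sumv u + sumv v.
Proof.
move=> u_ge0 v_ge0; rewrite /l1norm /sumv -big_split /=; apply: ler_sum => i _.
by rewrite !mxE (le_trans (ler_normB _ _)) // !ger0_norm.
Qed.

End L1norm.

Section ColumnSums.
Context {R : numFieldType} {K n : nat} (A : 'M[R]_(K, n)).
Implicit Types (w : 'cV[R]_n) (j k : 'I_n).

Definition colsum j : R := \sum_i A i j.

Definition off_mass w k : R := \sum_(j | j != k) colsum j * w j 0.

Lemma sumv_col j : sumv (col j A) = colsum j.
Proof. by apply: eq_bigr => i _; rewrite mxE. Qed.

Lemma mulmx_colE w : A *m w = \sum_j w j 0 *: col j A.
Proof.
apply/matrixP => i l; rewrite ord1 !mxE summxE.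
by apply: eq_bigr => j _; rewrite !mxE mulrC.
Qed.

Lemma sumv_mulmx w : sumv (A *m w) = \sum_j colsum j * w j 0.
Proof.
rewrite /sumv; under eq_bigr do rewrite mxE.
by rewrite exchange_big /=; apply: eq_bigr => j _; rewrite mulr_suml.
Qed.

Lemma objectiveE w : objective A w = \sum_(j < n) (j.+1)%:R * (colsum j * w j 0).
Proof.
rewrite /objective mxE; apply: eq_bigr => j _.
rewrite /Dmat mul_mx_diag !mxE [_ * (j.+1)%:R]mulrC -mulrA; congr (_ * (_ * _)).
by apply: eq_bigr => i _; rewrite !mxE mul1r.
Qed.

Definition col_weight k (s : R) : 'cV[R]_n :=
  \col_j (if j == k then s / colsum k else 0).

Section ColWeight.
Variables (k : 'I_n) (s : R).
Hypothesis colsum_k_gt0 : 0 < colsum k.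

Lemma col_weight_ge0 : 0 <= s -> nonneg_vec (col_weight k s).
Proof. by move=> s_ge0 j; rewrite mxE; case: ifP => // _; rewrite divr_ge0 // ltW. Qed.

Lemma colsum_col_weightE j : colsum j * col_weight k s j 0 = if j == k then s else 0.
Proof.
rewrite mxE; case: eqP => [->|_]; last by rewrite mulr0.
by rewrite mulrC divfK ?gt_eqF.
Qed.

Lemma sumv_mulmx_col_weight : sumv (A *m col_weight k s) = s.
Proof.
by rewrite sumv_mulmx (bigD1 k) //= big1 => [|j /negbTE jk];
  rewrite colsum_col_weightE ?eqxx ?addr0 ?jk.
Qed.

Lemma objective_col_weight : objective A (col_weight k s) = (k.+1)%:R * s.
Proof.
by rewrite objectiveE (bigD1 k) //= big1 => [|j /negbTE jk];
  rewrite colsum_col_weightE ?eqxx ?addr0 ?jk ?mulr0.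
Qed.

End ColWeight.

Hypothesis A_ge0 : forall i j, 0 <= A i j.

Lemma colsum_ge0 j : 0 <= colsum j.
Proof. exact: sumr_ge0. Qed.

Lemma off_mass_ge0 w k : nonneg_vec w -> 0 <= off_mass w k.
Proof. by move=> w_ge0; apply: sumr_ge0 => j _; rewrite mulr_ge0 ?colsum_ge0. Qed.

Lemma l1norm_colB_le j k : 0 < colsum k ->
  l1norm (col j A - (colsum j / colsum k) *: col k A) <= colsum j *+ 2.
Proof.
move=> ck_gt0.
have col_ge0 l : nonneg_vec (col l A) by move=> i; rewrite mxE.
have cjk_ge0 : 0 <= colsum j / colsum k by rewrite divr_ge0 ?colsum_ge0 ?ltW.
have scaled_ge0 : nonneg_vec ((colsum j / colsum k) *: col k A).
  by move=> i; rewrite mxE mulr_ge0 ?col_ge0.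
apply: le_trans (l1normB_le _ _ (col_ge0 j) scaled_ge0) _.
by rewrite sumvZ !sumv_col divfK ?gt_eqF // mulr2n.
Qed.

Lemma l1norm_normalized_le w k (b : R) :
  nonneg_vec w -> sumv (A *m w) = b -> 0 < b -> 0 < colsum k ->
  b / 2 * l1norm (b^-1 *: (A *m w) - (colsum k)^-1 *: col k A)
    <= off_mass w k.
Proof.
move=> w_ge0 Awb b_gt0 ck_gt0.
pose dev j := col j A - (colsum j / colsum k) *: col k A.
have decomp : b^-1 *: (A *m w) - (colsum k)^-1 *: col k A
    = b^-1 *: \sum_j w j 0 *: dev j.
  under eq_bigr do rewrite scalerBr scalerA.
  rewrite sumrB -mulmx_colE -scaler_suml scalerBr scalerA; congr (_ - _ *: _).
  under eq_bigr do rewrite mulrA [w _ 0 * _]mulrC.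
  by rewrite -mulr_suml -sumv_mulmx Awb mulKf ?gt_eqF.
have dev_le j :
    l1norm (w j 0 *: dev j) <= (if j != k then colsum j * w j 0 else 0) *+ 2.
  rewrite l1normZ ger0_norm //; have [->|_] /= := eqVneq j k.
    rewrite /dev divff ?gt_eqF // scale1r subrr mul0rn /l1norm big1 ?mulr0 // => i _.
    by rewrite mxE normr0.
  by rewrite [colsum j * _]mulrC -mulrnAr ler_wpM2l // l1norm_colB_le.
rewrite decomp l1normZ ger0_norm ?invr_ge0 ?(ltW b_gt0) // mulrA [b / 2 / b]mulrAC mulfV ?gt_eqF //.
rewrite mul1r ler_pdivrMl // mulr_natl /off_mass [in X in _ <= X]big_mkcond /= -sumrMnl.
by apply: le_trans (l1norm_sum_le _) _; apply: ler_sum => j _; apply: dev_le.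
Qed.

End ColumnSums.
Arguments colsum_ge0 {R K n A}.
Arguments off_mass_ge0 {R K n A}.
Arguments l1norm_normalized_le {R K n A}.

Section ExtremeColumns.
Context {R : realFieldType} {K M : nat} (A : 'M[R]_(K, M.+1)).
Hypothesis A_ge0 : forall i j, 0 <= A i j.

Lemma objective_add_off_mass_le w : nonneg_vec w ->
  objective A w + off_mass A w ord_max <= M.+1%:R * sumv (A *m w).
Proof.
move=> w_ge0; rewrite objectiveE sumv_mulmx mulr_sumr /off_mass [X in _ + X]big_mkcond -big_split.
apply: ler_sum => j _ /=; have cw_ge0 := mulr_ge0 (colsum_ge0 A_ge0 j) (w_ge0 j).
have [->|jM] /= := eqVneq j ord_max; first by rewrite addr0.
rewrite -[X in _ + X]mul1r -mulrDl ler_wpM2r // natr1 ler_nat ltnS ltn_neqAle -ltnS ltn_ord andbT.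
by apply: contra jM => /eqP jM; apply/eqP/val_inj.
Qed.

Lemma objective_ge_add_off_mass w : nonneg_vec w ->
  sumv (A *m w) + off_mass A w ord0 <= objective A w.
Proof.
move=> w_ge0; rewrite objectiveE sumv_mulmx /off_mass [X in _ + X]big_mkcond -big_split.
apply: ler_sum => j _ /=; have cw_ge0 := mulr_ge0 (colsum_ge0 A_ge0 j) (w_ge0 j).
have [->|j0] /= := eqVneq j ord0; first by rewrite addr0 mul1r.
rewrite -mulr2n -[_ *+ 2]mulr_natl ler_wpM2r // ler_nat ltnS lt0n.
by apply: contra j0 => /eqP j0; apply/eqP/val_inj.
Qed.

End ExtremeColumns.
Arguments objective_add_off_mass_le {R K M A}.
Arguments objective_ge_add_off_mass {R K M A}.

Lemma sup_attained (R : realType) (E : set R) x : E x -> ubound E x -> sup E = x.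
Proof.
move=> Ex ubx; apply/le_anti; rewrite ge_sup //; last by exists x.
by apply: ub_le_sup; first by exists x.
Qed.

Lemma inf_attained (R : realType) (E : set R) x : E x -> lbound E x -> inf E = x.
Proof.
move=> Ex lbx; apply/le_anti; rewrite lb_le_inf ?andbT //; last by exists x.
by apply: ge_inf; first by exists x.
Qed.

Section Theta.
Context {R : realType} {K M : nat} (A : 'M[R]_(K, M.+1)).
Hypothesis A_ge0 : forall i j, 0 <= A i j.

Lemma theta_max_tilde b : 0 < colsum A ord_max -> 0 <= b -> theta_max A (feas_tilde A b) = M.+1%:R * b.
Proof.
move=> cM_gt0 b_ge0; apply: sup_attained.
  exists (col_weight A ord_max b); last exact: objective_col_weight.
  by split; [exact: col_weight_ge0 | exact: sumv_mulmx_col_weight].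
move=> _ [w [w_ge0 <-] <-].
have := objective_add_off_mass_le A_ge0 _ w_ge0; have := off_mass_ge0 A_ge0 w ord_max w_ge0.
lra.
Qed.

Lemma theta_min_tilde b : 0 < colsum A ord0 -> 0 <= b -> theta_min A (feas_tilde A b) = b.
Proof.
move=> c0_gt0 b_ge0; apply: inf_attained.
  exists (col_weight A ord0 b); last by rewrite objective_col_weight ?mul1r.
  by split; [exact: col_weight_ge0 | exact: sumv_mulmx_col_weight].
move=> _ [w [w_ge0 <-] <-].
have := objective_ge_add_off_mass A_ge0 _ w_ge0; have := off_mass_ge0 A_ge0 w ord0 w_ge0.
lra.
Qed.

Section Star.
Variable beta : 'cV[R]_K.
Hypotheses (sumv_beta_gt0 : 0 < sumv beta) (feas_beta : feas_star A beta !=set0).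
Let b := sumv beta.

Lemma theta_max_star_le : 0 < colsum A ord_max -> theta_max A (feas_star A beta)
  <= M.+1%:R * b - b / 2 * l1norm (b^-1 *: beta - (colsum A ord_max)^-1 *: col ord_max A).
Proof.
move=> cM_gt0; apply: ge_sup; first by case: feas_beta => w Sw; exists (objective A w), w.
move=> _ [w [w_ge0 Aw] <-].
have Awb : sumv (A *m w) = b by rewrite Aw.
have := l1norm_normalized_le A_ge0 w ord_max b w_ge0 Awb sumv_beta_gt0 cM_gt0.
have := objective_add_off_mass_le A_ge0 _ w_ge0.
rewrite Aw -/b; lra.
Qed.

Lemma theta_min_star_ge : 0 < colsum A ord0 -> b + b / 2 * l1norm (b^-1 *: beta - (colsum A ord0)^-1 *: col ord0 A)
  <= theta_min A (feas_star A beta).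
Proof.
move=> c0_gt0; apply: lb_le_inf; first by case: feas_beta => w Sw; exists (objective A w), w.
move=> _ [w [w_ge0 Aw] <-].
have Awb : sumv (A *m w) = b by rewrite Aw.
have := l1norm_normalized_le A_ge0 w ord0 b w_ge0 Awb sumv_beta_gt0 c0_gt0.
have := objective_ge_add_off_mass A_ge0 _ w_ge0.
rewrite Aw -/b; lra.
Qed.

End Star.
End Theta.
Arguments theta_max_tilde {R K M A} A_ge0 {b}.
Arguments theta_min_tilde {R K M A} A_ge0 {b}.
Arguments theta_max_star_le {R K M A} A_ge0 {beta}.
Arguments theta_min_star_ge {R K M A} A_ge0 {beta}.

Theorem lemma2 (R : realType) (K M : nat) (A : 'M[R]_(K, M.+1)) (beta : 'cV[R]_K)
  (hA : forall i y, 0 <= A i y)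
  (hcol : forall y, 0 < sumv (col y A))
  (hbeta : nonneg_vec beta)
  (hb : 0 < sumv beta)
  (hfeas : feas_star A beta !=set0) :
  let b := sumv beta in
  let aM := col ord_max A in
  let a1 := col ord0 A in
  (theta_max A (feas_tilde A b) - theta_max A (feas_star A beta)
     >= b / 2 * l1norm (b^-1 *: beta - (sumv aM)^-1 *: aM))
  /\
  (theta_min A (feas_star A beta) - theta_min A (feas_tilde A b)
     >= b / 2 * l1norm (b^-1 *: beta - (sumv a1)^-1 *: a1)).
Proof.
move=> b aM a1; rewrite /aM /a1 !sumv_col.
have colsum_gt0 j : 0 < colsum A j by rewrite -sumv_col.
have b_ge0 : 0 <= b := ltW hb.
rewrite (theta_max_tilde hA (colsum_gt0 _) b_ge0) (theta_min_tilde hA (colsum_gt0 _) b_ge0).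
have := theta_max_star_le hA hb hfeas (colsum_gt0 _).
have := theta_min_star_ge hA hb hfeas (colsum_gt0 _).
by rewrite -/b; split; lra.
Qed.
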